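(* Let $S$ be a semigroup and $T$ a finite semigroup with $T^2=T$. If $S$ is $U(\mathrm{CF})$ then $S\times T$ is $U(\mathrm{CF})$; if $S$ is $U(\mathrm{DCF})$ then $S\times T$ is $U(\mathrm{DCF})$.
   Context: For a semigroup $S$ generated by a finite set $A$, $\mathrm{WP}(S,A)=\{u\#v^{\mathrm{rev}} : u,v\in A^+,\ u=_S v\}$, where $\#\notin A$ and $v^{\mathrm{rev}}$ is the reversal of $v$. A semigroup is $U(\mathrm{CF})$ (resp. $U(\mathrm{DCF})$) if it is finitely generated and its word problem with respect to some (equivalently any) finite generating set is context-free (resp. deterministic context-free). A semigroup $T$ is decomposable if $T^2=T$. *)

From Stdlib Require List.
From mathcomp Require Import all_boot.
From Stdlib Require Import Relation_Operators.
Set Implicit Arguments. Unset Strict Implicit. Unset Printing Implicit Defensive.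

Record cfg (Tm : Type) := CFG {
  cfg_nt : finType;
  cfg_start : cfg_nt;
  cfg_rules : list (cfg_nt * list (cfg_nt + Tm))
}.

Unset Implicit Arguments.
Inductive cfg_step (Tm : Type) (G : cfg Tm) :
    list (cfg_nt G + Tm) -> list (cfg_nt G + Tm) -> Prop :=
  | CfgStep (l r alpha : list (cfg_nt G + Tm)) (X : cfg_nt G) :
      List.In (X, alpha) (cfg_rules G) ->
      cfg_step Tm G (l ++ inl X :: r) (l ++ alpha ++ r).

Set Implicit Arguments.
Definition cfg_lang (Tm : Type) (G : cfg Tm) (w : list Tm) : Prop :=
  clos_refl_trans _ (cfg_step Tm G) [:: inl (cfg_start G)] (map inr w).

Definition context_free (A : finType) (L : list A -> Prop) : Prop :=
  exists G : cfg A, forall w, cfg_lang G w <-> L w.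

(* Deterministic pushdown automaton, acceptance by final state.
   Stack top is the head of the list. [dpda_delta q None X] is an
   epsilon-move; determinism: at most one move in every situation. *)
Record dpda (A : Type) := DPDA {
  dpda_Q : finType;
  dpda_G : finType;
  dpda_q0 : dpda_Q;
  dpda_Z0 : dpda_G;
  dpda_final : pred dpda_Q;
  dpda_delta : dpda_Q -> option A -> dpda_G -> option (dpda_Q * list dpda_G);
  dpda_det : forall q X, dpda_delta q None X <> None ->
               forall a, dpda_delta q (Some a) X = None
}.

Unset Implicit Arguments.
Definition dpda_conf (A : Type) (M : dpda A) : Type :=
  (dpda_Q M * list A * list (dpda_G M))%type.

Unset Implicit Arguments.
Inductive dpda_step (A : Type) (M : dpda A) : dpda_conf A M -> dpda_conf A M -> Prop :=
  | DStepRead q a w X gam p alpha :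
      @dpda_delta A M q (Some a) X = Some (p, alpha) ->
      dpda_step A M (q, a :: w, X :: gam) (p, w, alpha ++ gam)
  | DStepEps q w X gam p alpha :
      @dpda_delta A M q None X = Some (p, alpha) ->
      dpda_step A M (q, w, X :: gam) (p, w, alpha ++ gam).

Set Implicit Arguments.
Definition dpda_lang (A : Type) (M : dpda A) (w : list A) : Prop :=
  exists (p : dpda_Q M) (gam : list (dpda_G M)),
    clos_refl_trans _ (dpda_step A M) (dpda_q0 M, w, [:: dpda_Z0 M]) (p, [::], gam)
    /\ @dpda_final A M p.

Definition det_context_free (A : finType) (L : list A -> Prop) : Prop :=
  exists M : dpda A, forall w, dpda_lang M w <-> L w.

Definition word_val (S : Type) (mul : S -> S -> S) (X : Type) (phi : X -> S)
    (w : list X) : option S :=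
  match w with
  | [::] => None
  | a :: w' => Some (foldl (fun s b => mul s (phi b)) (phi a) w')
  end.

Definition generates (S : Type) (mul : S -> S -> S) (X : finType) (phi : X -> S) : Prop :=
  injective phi /\ forall s : S, exists w : list X, word_val mul phi w = Some s.

(* WP(S,A) = { u # v^rev : u, v in A^+, u =_S v } over the alphabet A + {#},
   where # is encoded as None and the letter a as Some a. *)
Definition word_problem (S : Type) (mul : S -> S -> S) (X : finType) (phi : X -> S)
    (x : list (option X)) : Prop :=
  exists u v : list X, u <> [::] /\ v <> [::] /\
    x = map Some u ++ None :: rev (map Some v) /\
    word_val mul phi u = word_val mul phi v.

Definition U_CF (S : Type) (mul : S -> S -> S) : Prop :=
  exists (X : finType) (phi : X -> S),
    generates mul phi /\ context_free (word_problem mul phi).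

Definition U_DCF (S : Type) (mul : S -> S -> S) : Prop :=
  exists (X : finType) (phi : X -> S),
    generates mul phi /\ det_context_free (word_problem mul phi).

Definition prod_mul (S T : Type) (mulS : S -> S -> S) (mulT : T -> T -> T)
    (x y : S * T) : S * T := (mulS x.1 y.1, mulT x.2 y.2).

From mathcomp Require Import all_boot.
From Stdlib Require Import Relation_Operators Operators_Properties.
Set Implicit Arguments. Unset Strict Implicit. Unset Printing Implicit Defensive.

(* Let [phi : X -> S] be a finite generating set of [S].  Then [X * T],
   mapped by [(x, t) |-> (phi x, t)], generates [S * T]: every [t] in a
   finite semigroup with [T^2 = T] is a product of any prescribed number of
   elements, so a word for [s] can be paired letterwise with a factorisation
   of [t].  Over these generators, a marked word [u # rev v] lies in the word
   problem of [S * T] iff its [X]-projection lies in the word problem of [S]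
   and the [T]-components of [u] and [v] have equal products.  The second
   condition is recognised by a finite automaton, and the first is the
   preimage of WP(S) under a letter-to-letter morphism. *)

Lemma In_enum (T : finType) (x : T) : List.In x (enum T).
Proof.
have : x \in enum T by rewrite mem_enum.
elim: (enum T) => //= y s IH; rewrite in_cons => /orP [/eqP ->|/IH]; auto.
Qed.

Lemma map_eq_cat (A B : Type) (f : A -> B) (l : seq A) (l1 l2 : seq B) :
  map f l = l1 ++ l2 ->
  exists l1' l2', [/\ l = l1' ++ l2', map f l1' = l1 & map f l2' = l2].
Proof.
elim: l1 l => [|b l1 IH] l /=; first by move=> <-; exists [::], l.
case: l => //= a l [<- /IH [l1' [l2' [-> <- <-]]]]; by exists (a :: l1'), l2'.
Qed.

(* Derivation forests.  [derives G al w] means that the sentential form [al]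
   derives the terminal word [w], with every nonterminal expanded by a
   derivation tree; this inductive view of [cfg_lang] is compositional. *)
Section Derivations.
Variables (Tm : Type) (G : cfg Tm).

Inductive derives : seq (cfg_nt G + Tm) -> seq Tm -> Prop :=
| derives_nil : derives [::] [::]
| derives_t a al w : derives al w -> derives (inr a :: al) (a :: w)
| derives_nt X rhs al w1 w2 : List.In (X, rhs) (cfg_rules G) ->
    derives rhs w1 -> derives al w2 -> derives (inl X :: al) (w1 ++ w2).

Lemma derives_cat al be w1 w2 :
  derives al w1 -> derives be w2 -> derives (al ++ be) (w1 ++ w2).
Proof.
move=> H; elim: H w2 => //= [a al0 w _ IH|X rhs al0 u1 u2 HX Hrhs _ _ IH] w2 Hw.
  by constructor; apply: IH.
by rewrite -catA; apply: derives_nt HX Hrhs (IH _ Hw).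
Qed.

Lemma derives_catP al be w : derives (al ++ be) w ->
  exists w1 w2, [/\ w = w1 ++ w2, derives al w1 & derives be w2].
Proof.
elim: al w => [|s al IH] w /= H; first by exists [::], w; split => //; constructor.
inversion H as [|a0 al0 w0 Hd|X rhs al0 u1 u2 HX Hrhs Hd]; subst.
  have [w1 [w2 [-> Ha Hb]]] := IH _ Hd.
  by exists (a0 :: w1), w2; split => //; constructor.
have [v1 [v2 [-> Ha Hb]]] := IH _ Hd.
by exists (u1 ++ v1), v2; rewrite catA; split => //; apply: derives_nt HX Hrhs Ha.
Qed.

Lemma derives_terminals w : derives (map inr w) w.
Proof. by elim: w => [|a w IH] /=; constructor. Qed.

Lemma derives_step al be w : cfg_step Tm G al be -> derives be w -> derives al w.
Proof.
case=> l r rhs X HX /derives_catP [w1 [w23 [-> H1 /derives_catP [w2 [w3 [-> H2 H3]]]]]].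
by apply: derives_cat H1 _; apply: derives_nt HX H2 H3.
Qed.

Lemma steps_in_context l r al be :
  clos_refl_trans _ (cfg_step Tm G) al be ->
  clos_refl_trans _ (cfg_step Tm G) (l ++ al ++ r) (l ++ be ++ r).
Proof.
elim => [x y [l0 r0 rhs X HX]|x|x y z _ IH1 _ IH2].
- by apply: rt_step; have := CfgStep Tm G (l ++ l0) (r0 ++ r) rhs X HX; rewrite -!catA.
- exact: rt_refl.
- exact: rt_trans IH1 IH2.
Qed.

Lemma derives_steps al w :
  derives al w -> clos_refl_trans _ (cfg_step Tm G) al (map inr w).
Proof.
elim => [|a al0 w0 _ IH|X rhs al0 w1 w2 HX _ IH1 _ IH2].
- exact: rt_refl.
- by have := steps_in_context [:: inr a] [::] IH; rewrite /= !cats0.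
- apply: (@rt_trans _ _ _ (rhs ++ al0)).
    by apply: rt_step; exact: (CfgStep Tm G [::] al0 rhs X HX).
  rewrite map_cat; apply: (@rt_trans _ _ _ (map inr w1 ++ al0)).
    exact: (steps_in_context [::] al0 IH1).
  by have := steps_in_context (map inr w1) [::] IH2; rewrite !cats0.
Qed.

Lemma steps_derives al w :
  clos_refl_trans _ (cfg_step Tm G) al (map inr w) -> derives al w.
Proof.
move/clos_rt_rt1n_iff; remember (map inr w) as c eqn:Ec => H.
elim: H Ec => [x ->|x y z Hxy _ IH Ec]; first exact: derives_terminals.
exact: derives_step Hxy (IH Ec).
Qed.

Lemma cfg_lang_derives w : cfg_lang G w <-> derives [:: inl (cfg_start G)] w.
Proof. by split; [apply: steps_derives | apply: derives_steps]. Qed.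

Lemma derives_nt1 X w : derives [:: inl X] w <->
  exists rhs, List.In (X, rhs) (cfg_rules G) /\ derives rhs w.
Proof.
split; last first.
  by case=> rhs [HX H]; rewrite -[w]cats0; apply: derives_nt HX H derives_nil.
move=> H; inversion H as [| |X0 rhs al w1 w2 HX Hrhs Hnil]; subst.
by exists rhs; inversion Hnil; rewrite cats0.
Qed.

End Derivations.
Arguments derives {Tm} G _ _.

(* Given a grammar [G] over
   [Tm], a renaming [h : Tm' -> Tm] and a DFA [(Qd, dl, d0, fin)] over [Tm'],
   the grammar [triple_cfg] has nonterminals [Some (p, s, q)] deriving the
   words [w] with [h w] derivable from the symbol [s] and [dl] running from
   [p] to [q] on [w], plus a fresh start symbol [None]. *)
Section TripleConstruction.
Variables (Tm Tm' Qd : finType) (h : Tm' -> Tm) (dl : Qd -> Tm' -> Qd)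
  (d0 : Qd) (fin : pred Qd) (G : cfg Tm).

Definition run (p : Qd) (w : seq Tm') : Qd := foldl dl p w.

Definition triple_nt : finType := option (Qd * (cfg_nt G + Tm) * Qd)%type.
Definition triple_sym : Type := (triple_nt + Tm')%type.

(* All ways of annotating [al] with a chain of states from [p] to [q]:
   the symbol [s_i] becomes the triple [(r_i, s_i, r_(i+1))]. *)
Fixpoint annotations (p q : Qd) (al : seq (cfg_nt G + Tm)) : seq (seq triple_sym) :=
  match al with
  | [::] => if p == q then [:: [::]] else [::]
  | s :: al' => List.flat_map (fun r =>
       List.map (fun rest => (inl (Some (p, s, r)) : triple_sym) :: rest)
                (annotations r q al')) (enum Qd)
  end.

Lemma annotations_nil p q g : List.In g (annotations p q [::]) <-> g = [::] /\ p = q.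
Proof.
rewrite /=; case: eqP => [->|ne] /=; first by split; [case=> // <- | case=> ->; left].
by split => // -[_ /ne].
Qed.

Lemma annotations_cons p q s al g : List.In g (annotations p q (s :: al)) <->
  exists r g', g = inl (Some (p, s, r)) :: g' /\ List.In g' (annotations r q al).
Proof.
rewrite /= List.in_flat_map; split.
  by case=> r [_ /List.in_map_iff [g' [<- Hg']]]; exists r, g'.
case=> r [g' [-> Hg']]; exists r; split; first exact: In_enum.
by apply/List.in_map_iff; exists g'.
Qed.

Definition triple_rules : seq (triple_nt * seq triple_sym) :=
  List.flat_map (fun f => if fin f then
      [:: ((None : triple_nt), [:: (inl (Some (d0, inl (cfg_start G), f)) : triple_sym)])]
      else [::]) (enum Qd)
  ++ List.flat_map (fun Xrhs => List.flat_map (fun p => List.flat_map (fun q =>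
        List.map (fun g => ((Some (p, inl Xrhs.1, q) : triple_nt), g))
                 (annotations p q Xrhs.2))
        (enum Qd)) (enum Qd)) (cfg_rules G)
  ++ List.flat_map (fun b => List.map (fun p =>
        ((Some (p, inr (h b), dl p b) : triple_nt), [:: (inr b : triple_sym)])) (enum Qd))
     (enum Tm').

Definition triple_cfg : cfg Tm' := @CFG Tm' triple_nt None triple_rules.

Lemma triple_rulesP (Y : triple_nt) g : List.In (Y, g) triple_rules <->
  [\/ exists f, [/\ Y = None, fin f & g = [:: inl (Some (d0, inl (cfg_start G), f))]],
      exists X rhs p q, [/\ Y = Some (p, inl X, q), List.In (X, rhs) (cfg_rules G) &
                            List.In g (annotations p q rhs)]
    | exists b p, Y = Some (p, inr (h b), dl p b) /\ g = [:: inr b]].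
Proof.
rewrite /triple_rules !List.in_app_iff !List.in_flat_map; split.
- case=> [[f [_ Hf]]|[[[X rhs] [Hr /List.in_flat_map [p [_ /List.in_flat_map
          [q [_ /List.in_map_iff [g' [[<- <-] Hg]]]]]]]]|
          [b [_ /List.in_map_iff [p [[<- <-] _]]]]]].
  + by move: Hf; case Ef: (fin f) => //= -[[<- <-]|//]; constructor 1; exists f.
  + by constructor 2; exists X, rhs, p, q.
  + by constructor 3; exists b, p.
- case=> [[f [-> Ef ->]]|[X [rhs [p [q [-> Hr Hg]]]]]|[b [p [-> ->]]]].
  + by left; exists f; split; [exact: In_enum | rewrite Ef; left].
  + right; left; exists (X, rhs); split => //.
    apply/List.in_flat_map; exists p; split; first exact: In_enum.
    apply/List.in_flat_map; exists q; split; first exact: In_enum.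
    by apply/List.in_map_iff; exists g.
  + right; right; exists b; split; first exact: In_enum.
    by apply/List.in_map_iff; exists p; split => //; exact: In_enum.
Qed.

Lemma triple_sound g w : derives triple_cfg g w ->
  forall p q al, List.In g (annotations p q al) -> derives G al (map h w) /\ run p w = q.
Proof.
elim=> [|b g0 w0 _ _|Y rhs g0 w1 w2 HY Hrhs IH1 _ IH2] p q
  [|s al] => [/annotations_nil [_ ->]|/annotations_cons [r [g' []]]
             |/annotations_nil []|/annotations_cons [r [g' []]]
             |/annotations_nil []|/annotations_cons [r [g' [[EY Eg0] Hg']]]] //.
  by split => //; constructor.
subst Y g0; have [IHa IHb] := IH2 _ _ _ Hg'.
case/triple_rulesP: HY => [[f [//]]|[X [rhs0 [p' [q' [[= Ep Es Er] Hr Hg]]]]]|[b [p' [[= Ep Es Er] Eg]]]]; subst.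
- have [H1 H2] := IH1 _ _ _ Hg.
  split; first by rewrite map_cat; apply: derives_nt Hr H1 IHa.
  by rewrite -H2 /run foldl_cat.
- inversion Hrhs as [|b1 b2 w3 Hn|]; subst.
  by inversion Hn; subst; split => //; constructor.
Qed.

Lemma triple_complete al v : derives G al v -> forall w p, v = map h w ->
  exists g, List.In g (annotations p (run p w) al) /\ derives triple_cfg g w.
Proof.
elim=> [|a b v0 _ IH|X rhs b v1 v2 Hr _ IH1 _ IH2] w p Ev.
- case: w Ev => // _; exists [::]; split; [exact/annotations_nil | constructor].
- case: w Ev => // b0 w [Ea Ev].
  have [g [Hg Hgen]] := IH w (dl p b0) Ev.
  exists (inl (Some (p, inr a, dl p b0)) :: g); split.
    by apply/annotations_cons; exists (dl p b0), g.
  apply: (@derives_nt _ triple_cfg _ [:: inr b0] g [:: b0] w) Hgen; last by do 2 constructor.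
  by apply/triple_rulesP; constructor 3; exists b0, p; rewrite Ea.
- move/esym: Ev => /map_eq_cat [w1 [w2 [-> E1 E2]]].
  have [g1 [Hg1 Hgen1]] := IH1 w1 p (esym E1).
  have [g2 [Hg2 Hgen2]] := IH2 w2 (run p w1) (esym E2).
  exists (inl (Some (p, inl X, run p w1)) :: g2); split.
    by apply/annotations_cons; exists (run p w1), g2; rewrite /run foldl_cat.
  apply: derives_nt Hgen1 Hgen2.
  by apply/triple_rulesP; constructor 2; exists X, rhs, p, (run p w1).
Qed.

Lemma triple_lang w : cfg_lang triple_cfg w <-> cfg_lang G (map h w) /\ fin (run d0 w).
Proof.
rewrite !cfg_lang_derives /=; split.
- case/derives_nt1 => g [/triple_rulesP [[f [_ Ef ->]]|[? [? [? [? [//]]]]]|[? [? [//]]]] H].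
  have [] := triple_sound H (q := f) (p := d0) (al := [:: inl (cfg_start G)]).
    by apply/annotations_cons; exists f, [::]; split => //; apply/annotations_nil.
  by move=> ? ->.
- case=> H Ef.
  have [g [/annotations_cons [r [g' [-> /annotations_nil [Eg' Er]]]] Hg]] :=
    triple_complete H d0 (erefl _).
  subst g' r.
  apply/derives_nt1; exists [:: inl (Some (d0, inl (cfg_start G), run d0 w))]; split => //.
  by apply/triple_rulesP; constructor 1; exists (run d0 w).
Qed.

End TripleConstruction.

Lemma cf_preimage_dfa (Tm Tm' Qd : finType) (h : Tm' -> Tm) (dl : Qd -> Tm' -> Qd)
    (d0 : Qd) (fin : pred Qd) (L : seq Tm -> Prop) (L' : seq Tm' -> Prop) :
  (forall w, L' w <-> L (map h w) /\ fin (foldl dl d0 w)) ->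
  context_free L -> context_free L'.
Proof.
move=> EL' [G HG]; exists (triple_cfg h dl d0 fin G) => w.
by rewrite triple_lang HG EL'.
Qed.

(* The same closure property for deterministic context-free languages, by
   the product of a DPDA [M] over [A] with a DFA over [A']: the product reads
   [b] where [M] reads [h b], advancing the DFA alongside, and moves on
   epsilon exactly as [M]; it accepts when both components are final. *)
Section ProductAutomaton.
Variables (A A' Qd : finType) (h : A' -> A) (dl : Qd -> A' -> Qd)
  (d0 : Qd) (fin : pred Qd) (M : dpda A).

Definition prod_state : finType := (dpda_Q M * Qd)%type.

Definition prod_delta (s : prod_state) (o : option A') (X : dpda_G M) :
    option (prod_state * seq (dpda_G M)) :=
  match o with
  | Some b => omap (fun m => ((m.1, dl s.2 b), m.2)) (dpda_delta (d:=M) s.1 (Some (h b)) X)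
  | None => omap (fun m => ((m.1, s.2), m.2)) (dpda_delta (d:=M) s.1 None X)
  end.

Lemma prod_delta_det q X :
  prod_delta q None X <> None -> forall a, prod_delta q (Some a) X = None.
Proof.
rewrite /prod_delta => H a.
by rewrite (@dpda_det _ M q.1 X) //; case: (dpda_delta q.1 None X) H.
Qed.

Definition prod_dpda : dpda A' :=
  @DPDA A' prod_state (dpda_G M) (dpda_q0 M, d0) (dpda_Z0 M)
    (fun s => dpda_final (d:=M) s.1 && fin s.2) prod_delta prod_delta_det.

Lemma prod_run_project (c1 c2 : dpda_conf A' prod_dpda) :
  clos_refl_trans _ (dpda_step A' prod_dpda) c1 c2 ->
  clos_refl_trans _ (dpda_step A M)
    (c1.1.1.1, map h c1.1.2, c1.2) (c2.1.1.1, map h c2.1.2, c2.2)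
  /\ exists u, c1.1.2 = u ++ c2.1.2 /\ c2.1.1.2 = foldl dl c1.1.1.2 u.
Proof.
move/clos_rt_rt1n_iff; elim=> [x|x y z Hxy _ [IH1 [u [Eu Ez]]]].
  by split; [exact: rt_refl | exists [::]].
case: Hxy Eu Ez IH1 => [[q d] a w X gam [p e] al|[q d] w X gam [p e] al] /= Hd Eu Ez IH1.
- move: Hd; rewrite /prod_delta /=.
  case E: (dpda_delta q (Some (h a)) X) => [[p' al']|] // [= Ep Ee Eal]; subst.
  split; last by exists (a :: u).
  by apply: rt_trans IH1; apply: rt_step; exact: DStepRead E.
- move: Hd; rewrite /prod_delta /=.
  case E: (dpda_delta q None X) => [[p' al']|] // [= Ep Ee Eal]; subst.
  split; last by exists u.
  by apply: rt_trans IH1; apply: rt_step; exact: DStepEps E.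
Qed.

Lemma prod_run_lift (c1 c2 : dpda_conf A M) :
  clos_refl_trans _ (dpda_step A M) c1 c2 ->
  forall q d w gam, c1 = (q, map h w, gam) ->
  exists w2, c2.1.2 = map h w2 /\ exists u, w = u ++ w2 /\
    clos_refl_trans _ (dpda_step A' prod_dpda)
      ((q, d), w, gam) ((c2.1.1, foldl dl d u), w2, c2.2).
Proof.
move/clos_rt_rt1n_iff; elim=> [x|x y z Hxy _ IH] q d w gam Ex.
  by subst x; exists w; split => //; exists [::]; split => //; exact: rt_refl.
case: Hxy IH Ex => [q0 a w0 X gam0 p al|q0 w0 X gam0 p al] Hd IH [Eq Ew Eg]; subst q0 gam.
- case: w Ew => // b w' [Ea Ew]; subst w0.
  have [w2 [E2 [u [Eu Hrt]]]] := IH p (dl d b) w' (al ++ gam0) erefl.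
  exists w2; split => //; exists (b :: u); split; first by rewrite Eu.
  apply: rt_trans Hrt; apply: rt_step; apply: DStepRead => /=.
  by rewrite /prod_delta /= -Ea Hd.
- subst w0; have [w2 [E2 [u [Eu Hrt]]]] := IH p d w (al ++ gam0) erefl.
  exists w2; split => //; exists u; split => //.
  apply: rt_trans Hrt; apply: rt_step; apply: DStepEps => /=.
  by rewrite /prod_delta /= Hd.
Qed.

Lemma prod_dpda_lang w :
  dpda_lang prod_dpda w <-> dpda_lang M (map h w) /\ fin (foldl dl d0 w).
Proof.
split.
- case=> [[p e] [gam [H /andP [F1 F2]]]].
  have [/= H1 [u [/= Eu Ee]]] := prod_run_project H.
  move: Eu; rewrite cats0 => Eu; subst u.
  by split; [exists p, gam | rewrite -Ee].
- case=> [[p [gam [H F]]] Fw].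
  have [[|b w2] [//= _ [u [Eu Hrt]]]] := prod_run_lift H d0 (erefl _).
  move: Eu Hrt; rewrite cats0 => <- Hrt.
  by exists (p, foldl dl d0 w), gam; split; [exact: Hrt | rewrite /= F].
Qed.

End ProductAutomaton.

Lemma dcf_preimage_dfa (A A' Qd : finType) (h : A' -> A) (dl : Qd -> A' -> Qd)
    (d0 : Qd) (fin : pred Qd) (L : seq A -> Prop) (L' : seq A' -> Prop) :
  (forall w, L' w <-> L (map h w) /\ fin (foldl dl d0 w)) ->
  det_context_free L -> det_context_free L'.
Proof.
move=> EL' [M HM]; exists (prod_dpda h dl d0 fin M) => w.
by rewrite prod_dpda_lang HM EL'.
Qed.

(* A word [x] over [X * T] plus the marker lies in the word
   problem of [S * T] iff its [X]-projection lies in the word problem of [S]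
   and the [T]-components on both sides of the marker have the same product;
   the latter is checked by a DFA with state space
   [bool * option T * option T] (marker seen, product before and product
   after the marker, [None] standing for the empty product). *)
Section DirectProduct.
Variables (S : Type) (mulS : S -> S -> S).
Variables (T : finType) (mulT : T -> T -> T) (assocT : associative mulT).
Variables (X : finType) (phi : X -> S).

Definition prod_gens : finType := (X * T)%type.
Definition prod_phi (p : prod_gens) : S * T := (phi p.1, p.2).
Definition erase_T (c : option prod_gens) : option X := omap fst c.

Definition mul1 (x y : option T) : option T :=
  match x, y with
  | None, _ => y
  | _, None => x
  | Some a, Some b => Some (mulT a b)
  end.

Lemma mul1A : associative mul1.
Proof. by case=> [a|] [b|] [c|] //=; rewrite assocT. Qed.

Lemma mul1x0 x : mul1 x None = x. Proof. by case: x. Qed.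

Definition tval (u : seq prod_gens) : option T := word_val mulT snd u.

Lemma tval_cons b v : tval (b :: v) = mul1 (Some b.2) (tval v).
Proof.
case: v => //= c v; congr Some.
by elim: v (mulT b.2 c.2) c.2 => //= d v IH s t; rewrite -assocT IH.
Qed.

Definition wp_state : finType := (bool * option T * option T)%type.

(* Before the marker the DFA multiplies [T]-letters on the right of the
   first product; after it, on the left of the second, since the second
   word is read reversed. *)
Definition wp_step (st : wp_state) (c : option prod_gens) : wp_state :=
  match c with
  | None => (true, st.1.2, st.2)
  | Some b => if st.1.1 then (true, st.1.2, mul1 (Some b.2) st.2)
              else (false, mul1 st.1.2 (Some b.2), st.2)
  end.
Definition wp_start : wp_state := (false, None, None).
Definition wp_final (st : wp_state) : bool := st.1.1 && (st.1.2 == st.2).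

Lemma run_before_marker u o pv :
  foldl wp_step (false, o, pv) (map Some u) = (false, mul1 o (tval u), pv).
Proof.
elim: u o => [|b u IH] o; first by rewrite /= mul1x0.
by rewrite tval_cons mul1A -IH.
Qed.

Lemma run_after_marker v pu o :
  foldl wp_step (true, pu, o) (rev (map Some v)) = (true, pu, mul1 (tval v) o).
Proof.
elim: v o => [|b v IH] o //.
by rewrite tval_cons map_cons rev_cons -cats1 foldl_cat IH -mul1A.
Qed.

Lemma run_marked u v :
  foldl wp_step wp_start (map Some u ++ None :: rev (map Some v)) = (true, tval u, tval v).
Proof. by rewrite foldl_cat run_before_marker /= run_after_marker mul1x0. Qed.

Lemma word_val_prod u : word_val (prod_mul mulS mulT) prod_phi u =
  match word_val mulS phi (map fst u), tval u with
  | Some s, Some t => Some (s, t) | _, _ => None end.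
Proof.
case: u => //= b u; suff -> : forall s t,
    foldl (fun x b => prod_mul mulS mulT x (prod_phi b)) (s, t) u =
    (foldl (fun x b => mulS x (phi b)) s (map fst u), foldl (fun x b => mulT x b.2) t u)
  by [].
by elim: u => //= c u IH s t; rewrite IH.
Qed.

Lemma word_val_prod_eq u v :
  word_val (prod_mul mulS mulT) prod_phi u = word_val (prod_mul mulS mulT) prod_phi v <->
  word_val mulS phi (map fst u) = word_val mulS phi (map fst v) /\ tval u = tval v.
Proof.
rewrite !word_val_prod.
case: u => [|a u]; case: v => [|b v] /=; split => //; try by case.
- by case=> -> ->.
- by case=> [[->] [->]].
Qed.

Lemma map_erase_T (y : seq (option prod_gens)) (z : seq X) : map erase_T y = map Some z ->
  exists y', y = map Some y' /\ map fst y' = z.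
Proof.
elim: y z => [|c y IH] [|a z] //=; first by exists [::].
case: c => // b [Ea /IH [y' [-> <-]]].
by exists (b :: y'); rewrite /= Ea.
Qed.

Lemma erase_T_marked x u' v' :
  map erase_T x = map Some u' ++ None :: rev (map Some v') ->
  exists u v, [/\ x = map Some u ++ None :: rev (map Some v),
                  map fst u = u' & map fst v = v'].
Proof.
move=> /map_eq_cat [x1 [x2' [-> E1]]].
case: x2' => [|[c|] x2] // [E2].
have [u [-> Eu]] := map_erase_T E1.
have /map_erase_T [v [Ev <-]] : map erase_T (rev x2) = map Some v'.
  by rewrite map_rev E2 revK.
by exists u, v; rewrite -Ev revK.
Qed.

Lemma word_problem_prod x : word_problem (prod_mul mulS mulT) prod_phi x <->
  word_problem mulS phi (map erase_T x) /\ wp_final (foldl wp_step wp_start x).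
Proof.
split.
- case=> u [v [Hu [Hv [-> /word_val_prod_eq [E1 E2]]]]].
  split; last by rewrite run_marked /wp_final /= E2 eqxx.
  exists (map fst u), (map fst v); rewrite map_cat /= map_rev -!map_comp.
  by split; [case: (u) Hu | split; [case: (v) Hv | ]].
- case=> [[u' [v' [Hu [Hv [/erase_T_marked [u [v [Ex Eu Ev]]] Ew]]]]] F].
  exists u, v; split; first by move=> Eu0; apply: Hu; rewrite -Eu Eu0.
  split; first by move=> Ev0; apply: Hv; rewrite -Ev Ev0.
  split=> //; apply/word_val_prod_eq; rewrite Eu Ev; split=> //.
  by move: F; rewrite Ex run_marked /wp_final /= => /eqP.
Qed.

Lemma products_of_every_length (decT : forall t : T, exists a b : T, t = mulT a b) n t :
  exists ts : seq T, size ts = n.+1 /\ word_val mulT id ts = Some t.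
Proof.
elim: n t => [|n IH] t; first by exists [:: t].
have [a [b ->]] := decT t; have [[|c ts] [// Hs [<-]]] := IH a.
by exists (rcons (c :: ts) b); rewrite size_rcons Hs /= foldl_rcons.
Qed.

(* A word [w] for [s] is paired letterwise with a factorisation of [t]
   of the same length; injectivity is componentwise. *)
Lemma generates_prod (decT : forall t : T, exists a b : T, t = mulT a b) :
  generates mulS phi -> generates (prod_mul mulS mulT) prod_phi.
Proof.
case=> phi_inj phi_gen; split; first by case=> a t [b t'] [/phi_inj -> ->].
case=> s t; have [[|a w] // Hw] := phi_gen s.
have [ts [Hs Hv]] := products_of_every_length decT (size w) t.
have Hz : size (a :: w) = size ts by rewrite Hs.
have fst_zip : map fst (zip (a :: w) ts) = a :: w by apply: unzip1_zip; rewrite Hz.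
have snd_zip : map snd (zip (a :: w) ts) = ts by apply: unzip2_zip; rewrite Hz.
exists (zip (a :: w) ts); rewrite word_val_prod fst_zip Hw.
suff -> : tval (zip (a :: w) ts) = Some t by [].
rewrite -Hv -[in RHS]snd_zip.
by case: (zip _ _) => //= c z; elim: z (c.2) => //= d z IH r.
Qed.

End DirectProduct.

Theorem mainTheorem4 (S : Type) (mulS : S -> S -> S) (assocS : associative mulS)
    (T : finType) (mulT : T -> T -> T) (assocT : associative mulT)
    (decT : forall t : T, exists a b : T, t = mulT a b) :
  (U_CF mulS -> U_CF (prod_mul mulS mulT)) /\
  (U_DCF mulS -> U_DCF (prod_mul mulS mulT)).
Proof.
have wp_prod (X : finType) (phi : X -> S) := word_problem_prod mulS assocT phi.
split.
- case=> X [phi [Hgen Hcf]]; exists (prod_gens T X), (prod_phi phi).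
  split; first exact: generates_prod decT Hgen.
  exact: cf_preimage_dfa (wp_prod X phi) Hcf.
- case=> X [phi [Hgen Hdcf]]; exists (prod_gens T X), (prod_phi phi).
  split; first exact: generates_prod decT Hgen.
  exact: dcf_preimage_dfa (wp_prod X phi) Hdcf.
Qed.
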